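(* Let $L$ be one of the logics $\mathbf{IL}^-(\mathbf{J4}_{+})$, $\mathbf{IL}^-(\mathbf{J1},\mathbf{J4}_{+})$, $\mathbf{IL}^-(\mathbf{J4}_{+},\mathbf{J5})$, $\mathbf{IL}^-(\mathbf{J1},\mathbf{J4}_{+},\mathbf{J5})$. For any modal formula $A$ the following are equivalent: (i) $L\vdash A$; (ii) $A$ is valid in all simplified $L$-frames; (iii) $A$ is valid in all finite simplified $L$-frames.
   Context: Modal formulas are built from propositional variables, $\top$, $\bot$ using $\to,\lor,\land$, unary $\Box$ and binary $\rhd$; $\lnot A:=A\to\bot$, $\Diamond A:=\lnot\Box\lnot A$. The logic $\mathbf{IL}^-$ has as axioms all tautologies, $\Box(A\to B)\to(\Box A\to\Box B)$, $\Box(\Box A\to A)\to\Box A$, $\mathbf{J3}$: $(A\rhd C)\land(B\rhd C)\to(A\lor B)\rhd C$, and $\mathbf{J6}$: $\Box\lnot A\leftrightarrow A\rhd\bot$; its rules are modus ponens, necessitation ($A/\Box A$), $\mathbf{R1}$: from $A\to B$ infer $C\rhd A\to C\rhd B$, and $\mathbf{R2}$: from $A\to B$ infer $B\rhd C\to A\rhd C$. $\mathbf{IL}^-(\Sigma_1,\dots,\Sigma_n)$ denotes $\mathbf{IL}^-$ with the axiom schemes $\Sigma_i$ added, where $\mathbf{J1}$: $\Box(A\to B)\to A\rhd B$; $\mathbf{J4}_{+}$: $\Box(A\to B)\to(C\rhd A\to C\rhd B)$; $\mathbf{J5}$: $\Diamond A\rhd A$. A simplified $\mathbf{IL}^-(\mathbf{J4}_{+})$-frame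 is $(W,R,S)$ with $W$ non-empty, $R$ a transitive, conversely well-founded binary relation on $W$, $S$ any binary relation on $W$; it is finite if $W$ is finite. Forcing: arbitrary on variables, Boolean clauses as usual, $x\Vdash\Box A$ iff $y\Vdash A$ for all $y$ with $xRy$, and $x\Vdash A\rhd B$ iff for every $y$ with $xRy$ and $y\Vdash A$ there is $z$ with $xRz$, $ySz$, $z\Vdash B$. $A$ is valid in a frame if it is forced at every point under every forcing relation. A simplified $L$-frame is a simplified $\mathbf{IL}^-(\mathbf{J4}_{+})$-frame such that: if $\mathbf{J1}$ is an axiom of $L$ then $S$ is reflexive; if $\mathbf{J5}$ is an axiom of $L$ then $R\subseteq S$. *)

From Stdlib Require Import List.

Inductive form : Type :=
| Var : nat -> form
| Top : form
| Bot : form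
| Imp : form -> form -> form
| Or  : form -> form -> form
| And : form -> form -> form
| Box : form -> form
| Rhd : form -> form -> form.

Definition Neg (A : form) : form := Imp A Bot.
Definition Dia (A : form) : form := Neg (Box (Neg A)).
Definition Iff (A B : form) : form := And (Imp A B) (Imp B A).

Fixpoint peval (v : form -> bool) (A : form) : bool :=
  match A with
  | Var _ => v A
  | Top => true
  | Bot => false
  | Imp B C => implb (peval v B) (peval v C)
  | Or B C => orb (peval v B) (peval v C)
  | And B C => andb (peval v B) (peval v C)
  | Box _ => v A
  | Rhd _ _ => v A
  end.

(* A is a tautology: true under every truth assignment to its atoms
   (= substitution instance of a propositional tautology). *)
Definition tautology (A : form) : Prop := forall v : form -> bool, peval v A = true.

(* Provability in IL^-(J4+) extended by J1 (if j1 = true) and J5 (if j5 = true). *)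
Inductive prov (j1 j5 : bool) : form -> Prop :=
| ax_taut : forall A, tautology A -> prov j1 j5 A
| ax_K : forall A B, prov j1 j5 (Imp (Box (Imp A B)) (Imp (Box A) (Box B)))
| ax_L : forall A, prov j1 j5 (Imp (Box (Imp (Box A) A)) (Box A))
| ax_J3 : forall A B C,
    prov j1 j5 (Imp (And (Rhd A C) (Rhd B C)) (Rhd (Or A B) C))
| ax_J6 : forall A, prov j1 j5 (Iff (Box (Neg A)) (Rhd A Bot))
| ax_J4p : forall A B C,
    prov j1 j5 (Imp (Box (Imp A B)) (Imp (Rhd C A) (Rhd C B)))
| ax_J1 : forall A B, j1 = true -> prov j1 j5 (Imp (Box (Imp A B)) (Rhd A B))
| ax_J5 : forall A, j5 = true -> prov j1 j5 (Rhd (Dia A) A)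
| r_MP : forall A B, prov j1 j5 (Imp A B) -> prov j1 j5 A -> prov j1 j5 B
| r_Nec : forall A, prov j1 j5 A -> prov j1 j5 (Box A)
| r_R1 : forall A B C, prov j1 j5 (Imp A B) -> prov j1 j5 (Imp (Rhd C A) (Rhd C B))
| r_R2 : forall A B C, prov j1 j5 (Imp A B) -> prov j1 j5 (Imp (Rhd B C) (Rhd A C)).

Definition simplified_frame (W : Type) (R S : W -> W -> Prop) : Prop :=
  inhabited W /\
  (forall x y z, R x y -> R y z -> R x z) /\
  well_founded (fun y x => R x y).

Definition simplified_L_frame (j1 j5 : bool) (W : Type) (R S : W -> W -> Prop) : Prop :=
  simplified_frame W R S /\
  (j1 = true -> forall x, S x x) /\
  (j5 = true -> forall x y, R x y -> S x y).

Definition finite_type (W : Type) : Prop := exists l : list W, forall x : W, In x l.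

Fixpoint forces {W : Type} (R S : W -> W -> Prop) (V : nat -> W -> Prop)
  (x : W) (A : form) : Prop :=
  match A with
  | Var p => V p x
  | Top => True
  | Bot => False
  | Imp B C => forces R S V x B -> forces R S V x C
  | Or B C => forces R S V x B \/ forces R S V x C
  | And B C => forces R S V x B /\ forces R S V x C
  | Box B => forall y, R x y -> forces R S V y B
  | Rhd B C => forall y, R x y -> forces R S V y B ->
                 exists z, R x z /\ S y z /\ forces R S V z C
  end.

Definition valid_in {W : Type} (R S : W -> W -> Prop) (A : form) : Prop :=
  forall (V : nat -> W -> Prop) (x : W), forces R S V x A.

(* Soundness is checked rule by rule; Löb's axiom holds because R is
   transitive and conversely well-founded.

   Completeness is proved by a finite countermodel for an unprovable A.  Fix a
   finite set Phi containing the subformulas of A and a few boxed negations.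
   Worlds are chains of maximal consistent subsets of Phi, each a successor of
   the previous one: it keeps every boxed formula together with its body and
   adds a new boxed formula, so a chain is no longer than Phi.  R is extension
   of chains.  A formula B |> C missing from the last atom G of a chain is
   refuted by appending a C-critical successor D containing B: every B' |> C'
   in G with B' in D has an answer, a successor of G containing C' but not C.
   S relates D to every world except the extensions of G that contain C, in
   particular to these answers.  Under J1 (resp. J5) the atom D also avoids C
   (resp. contains Box ~C), so adding the reflexive pairs (resp. R) to S gives
   B no new route to C. *)

From Stdlib Require Import List Lia Classical ClassicalEpsilon ProofIrrelevance Wf_nat.
Import ListNotations.

(** * Soundness *)

Section Soundness.
Variables (W : Type) (R S : W -> W -> Prop).
Hypothesis R_trans : forall x y z, R x y -> R y z -> R x z.
Hypothesis R_cwf : well_founded (fun y x => R x y).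

Definition forced_at (V : nat -> W -> Prop) (x : W) (A : form) : bool :=
  if excluded_middle_informative (forces R S V x A) then true else false.

Lemma peval_forced_at V x A : peval (forced_at V x) A = true <-> forces R S V x A.
Proof.
  induction A; cbn [peval forces]; try rewrite <- IHA1, <- IHA2.
  all: try (unfold forced_at; destruct excluded_middle_informative; intuition discriminate).
  all: try (intuition discriminate).
  all: destruct (peval _ A1), (peval _ A2); simpl; intuition.
Qed.

Lemma forces_lob V x A :
  forces R S V x (Box (Imp (Box A) A)) -> forces R S V x (Box A).
Proof.
  intros H y. induction y as [y IH] using (well_founded_ind R_cwf).
  intros Hxy. apply (H y Hxy). intros w Hyw. apply IH; eauto.
Qed.

End Soundness.

Lemma soundness j1 j5 A : prov j1 j5 A ->
  forall W R S, simplified_L_frame j1 j5 W R S -> valid_in R S A.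
Proof.
  intros HA W R S [[_ [R_trans R_cwf]] [S_refl R_sub_S]].
  induction HA; intros V x; cbn [forces Neg Dia Iff] in *.
  - apply peval_forced_at, H.
  - eauto.
  - apply forces_lob; auto.
  - intros [HAC HBC] y Hxy [Hy|Hy]; auto.
  - split; [intros H y Hxy Hy; exfalso; eauto|].
    intros H y Hxy Hy. destruct (H y Hxy Hy) as [z [_ [_ []]]].
  - intros HAB HCA y Hxy Hy. destruct (HCA y Hxy Hy) as [z [? [? ?]]]. eauto 6.
  - intros HAB y Hxy Hy. exists y. auto.
  - intros y Hxy Hy.
    destruct (classic (exists w, R y w /\ forces R S V w A)) as [[w [Hyw Hw]]|Hn].
    + exists w. eauto.
    + exfalso. apply Hy. intros w Hyw Hw. eauto.
  - apply IHHA1, IHHA2.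
  - auto.
  - intros H y Hxy Hy. destruct (H y Hxy Hy) as [z [? [? ?]]].
    exists z. repeat split; auto. apply IHHA; auto.
  - intros H y Hxy Hy. apply H; auto. apply IHHA; auto.
Qed.

Fixpoint conj_list (l : list form) : form :=
  match l with [] => Top | a :: l' => And a (conj_list l') end.
Fixpoint disj_list (l : list form) : form :=
  match l with [] => Bot | a :: l' => Or a (disj_list l') end.

Lemma peval_conj_list v l :
  peval v (conj_list l) = true <-> forall p, In p l -> peval v p = true.
Proof.
  induction l; simpl; [firstorder|].
  rewrite Bool.andb_true_iff, IHl. firstorder congruence.
Qed.

Section PropositionalReasoning.
Variables j1 j5 : bool.
Notation pv := (prov j1 j5).

Lemma prov_taut_mp P Q : tautology (Imp P Q) -> pv P -> pv Q.
Proof. intros H. apply r_MP, ax_taut, H. Qed.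

Lemma prov_and_curry P Q (G : Prop) : (pv (And P Q) -> G) -> pv P -> pv Q -> G.
Proof.
  intros H HP HQ. apply H. refine (r_MP _ _ _ _ (prov_taut_mp P _ _ HP) HQ).
  intros v. simpl. destruct (peval v P), (peval v Q); reflexivity.
Qed.

End PropositionalReasoning.

Ltac truth_table :=
  let v := fresh "v" in
  repeat match goal with X := _ |- _ => subst X end;
  intro v; unfold Dia, Iff, Neg in *; simpl;
  repeat match goal with
         | |- context [peval v ?X] => destruct (peval v X)
         | |- context [v ?X] => destruct (v X)
         end; reflexivity.

(* The premises are conjoined, so one truth table justifies the step. *)
Tactic Notation "from_premises" ne_hyp_list(hs) :=
  revert hs; repeat refine (prov_and_curry _ _ _ _ _ _); apply prov_taut_mp; truth_table.

Section DerivedTheorems.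
Variables j1 j5 : bool.
Notation pv := (prov j1 j5).

Lemma box_mono P Q : pv (Imp P Q) -> pv (Imp (Box P) (Box Q)).
Proof. intros H. eapply r_MP; [apply ax_K|]. apply r_Nec, H. Qed.

Lemma box_and P Q : pv (Imp (Box P) (Imp (Box Q) (Box (And P Q)))).
Proof.
  assert (h1 : pv (Imp (Box P) (Box (Imp Q (And P Q))))) by (apply box_mono, ax_taut; truth_table).
  pose proof (ax_K j1 j5 Q (And P Q)) as h2.
  from_premises h1 h2.
Qed.

Lemma box_trans P : pv (Imp (Box P) (Box (Box P))).
Proof.
  set (Q := And (Box P) P).
  assert (h1 : pv (Imp (Box Q) (Box P))) by (apply box_mono, ax_taut; truth_table).
  assert (h2 : pv (Imp (Box Q) (Box (Box P)))) by (apply box_mono, ax_taut; truth_table).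
  assert (h3 : pv (Imp P (Imp (Box Q) Q))) by from_premises h1.
  apply box_mono in h3.
  pose proof (ax_L j1 j5 Q) as h4.
  from_premises h2 h3 h4.
Qed.

Lemma imp_box_conj_list H l :
  (forall p, In p l -> pv (Imp H (Box p))) -> pv (Imp H (Box (conj_list l))).
Proof.
  induction l as [|a l IH]; intros Hl; simpl.
  - assert (h : pv (Box Top)) by (apply r_Nec, ax_taut; truth_table).
    from_premises h.
  - assert (ha : pv (Imp H (Box a))) by (apply Hl; simpl; auto).
    assert (hl : pv (Imp H (Box (conj_list l)))) by (apply IH; intros; apply Hl; simpl; auto).
    pose proof (box_and a (conj_list l)) as h.
    from_premises ha hl h.
Qed.

Lemma rhd_bot_l C : pv (Rhd Bot C).
Proof.
  pose proof (ax_J6 j1 j5 Bot) as h1.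
  assert (h2 : pv (Box (Neg Bot))) by (apply r_Nec, ax_taut; truth_table).
  assert (h3 : pv (Imp (Rhd Bot Bot) (Rhd Bot C))) by (apply r_R1, ax_taut; truth_table).
  from_premises h1 h2 h3.
Qed.

Lemma imp_rhd_disj_list H l C :
  (forall p, In p l -> pv (Imp H (Rhd p C))) -> pv (Imp H (Rhd (disj_list l) C)).
Proof.
  induction l as [|a l IH]; intros Hl; simpl.
  - pose proof (rhd_bot_l C) as h. from_premises h.
  - assert (ha : pv (Imp H (Rhd a C))) by (apply Hl; simpl; auto).
    assert (hl : pv (Imp H (Rhd (disj_list l) C))) by (apply IH; intros; apply Hl; simpl; auto).
    pose proof (ax_J3 j1 j5 a (disj_list l) C) as h.
    from_premises ha hl h.
Qed.

(* The part of P outside Q interprets Bot by J6, hence C; J3 joins it with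
   P /\ Q. *)
Lemma rhd_box_antitone P Q C : pv (Imp (Box (Imp P Q)) (Imp (Rhd Q C) (Rhd P C))).
Proof.
  set (X := And P (Neg Q)).
  assert (h1 : pv (Imp (Rhd Q C) (Rhd (And P Q) C))) by (apply r_R2, ax_taut; truth_table).
  assert (h2 : pv (Imp (Box (Imp P Q)) (Box (Neg X)))) by (apply box_mono, ax_taut; truth_table).
  pose proof (ax_J6 j1 j5 X) as h3.
  assert (h4 : pv (Imp (Rhd X Bot) (Rhd X C))) by (apply r_R1, ax_taut; truth_table).
  pose proof (ax_J3 j1 j5 (And P Q) X C) as h5.
  assert (h6 : pv (Imp (Rhd (Or (And P Q) X) C) (Rhd P C))) by (apply r_R2, ax_taut; truth_table).
  from_premises h1 h2 h3 h4 h5 h6.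
Qed.

Lemma rhd_J1_disjunct C : pv (Rhd (if j1 then C else Bot) C).
Proof.
  pose proof (rhd_bot_l C) as hbot.
  assert (h : pv (Box (Imp C C))) by (apply r_Nec, ax_taut; truth_table).
  destruct j1 eqn:Hj1; [|exact hbot].
  pose proof (ax_J1 j1 j5 C C Hj1) as hJ1. rewrite Hj1 in hJ1. from_premises h hJ1.
Qed.

Lemma rhd_J5_disjunct C : pv (Rhd (if j5 then Dia C else Bot) C).
Proof.
  pose proof (rhd_bot_l C) as hbot.
  destruct j5 eqn:Hj5; [apply ax_J5; reflexivity|exact hbot].
Qed.

End DerivedTheorems.

Definition form_eq_dec : forall x y : form, {x = y} + {x <> y}.
Proof. decide equality; apply PeanoNat.Nat.eq_dec. Defined.

Definition inb (x : form) (l : list form) : bool := if in_dec form_eq_dec x l then true else false.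

Lemma inb_iff x l : inb x l = true <-> In x l.
Proof. unfold inb; destruct in_dec; split; auto; discriminate. Qed.

Fixpoint sub (A : form) : list form :=
  A :: match A with
       | Imp B C | Or B C | And B C | Rhd B C => sub B ++ sub C
       | Box B => sub B
       | _ => []
       end.

Lemma sub_refl A : In A (sub A).
Proof. destruct A; simpl; auto. Qed.

Lemma sub_trans A B C : In B (sub A) -> In C (sub B) -> In C (sub A).
Proof.
  induction A; simpl; intros [<-|HB] HC; auto; try contradiction;
    rewrite in_app_iff in HB |- *; right; destruct HB; eauto.
Qed.

Definition rhd_pairs (l : list form) : list (form * form) :=
  flat_map (fun p => match p with Rhd B C => [(B, C)] | _ => [] end) l.

Lemma in_rhd_pairs B C l : In (B, C) (rhd_pairs l) <-> In (Rhd B C) l.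
Proof.
  unfold rhd_pairs; rewrite in_flat_map; split.
  - intros [p [Hp HE]]. destruct p; simpl in HE; try contradiction.
    destruct HE as [E|[]]; inversion E; subst; auto.
  - intros H; exists (Rhd B C); simpl; auto.
Qed.

Definition unbox (l : list form) : list form :=
  flat_map (fun p => match p with Box E => [E] | _ => [] end) l.

Lemma in_unbox E l : In E (unbox l) <-> In (Box E) l.
Proof.
  unfold unbox; rewrite in_flat_map; split.
  - intros [p [Hp HE]]. destruct p; simpl in HE; try contradiction. destruct HE as [<-|[]]; auto.
  - intros H; exists (Box E); simpl; auto.
Qed.

Definition literals (f : form -> bool) (L : list form) : form :=
  conj_list (map (fun p => if f p then p else Neg p) L).

Lemma peval_literals v f L :
  peval v (literals f L) = true <-> forall p, In p L -> peval v p = f p.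
Proof.
  unfold literals. rewrite peval_conj_list. split.
  - intros H p Hp. specialize (H _ (in_map _ _ _ Hp)). cbv beta in H.
    destruct (f p); simpl in H; [auto|destruct (peval v p); auto].
  - intros H x Hx. apply in_map_iff in Hx as [p [<- Hp]]. rewrite <- (H p Hp).
    destruct (peval v p) eqn:E; simpl; rewrite ?E; auto.
Qed.

Definition succ (G D : list form) : Prop :=
  (forall E, In (Box E) G -> In E D /\ In (Box E) D) /\
  (exists E, In (Box E) D /\ ~ In (Box E) G).

Lemma succ_trans G D T : succ G D -> succ D T -> succ G T.
Proof.
  intros [HGD [E [HE HnE]]] [HDT _]. split; [intros X HX; apply HDT, HGD, HX|].
  exists E. split; [apply HDT, HE|exact HnE].
Qed.

Definition is_box (p : form) : bool := match p with Box _ => true | _ => false end.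
Definition box_count (D : list form) : nat := length (nodup form_eq_dec (filter is_box D)).

Lemma succ_box_count G D : succ G D -> box_count G < box_count D.
Proof.
  intros [Hinh [E [HE HnE]]]. apply (NoDup_incl_length (l := Box E :: _)).
  - constructor; [|apply NoDup_nodup]. rewrite nodup_In, filter_In. tauto.
  - intros x [<-|Hx]; rewrite nodup_In, filter_In in *; [auto|].
    destruct Hx as [Hx Hb]. destruct x; try discriminate. split; [apply Hinh, Hx|auto].
Qed.

Lemma box_count_le D L : incl D L -> box_count D <= length L.
Proof.
  intros HD. apply NoDup_incl_length; [apply NoDup_nodup|].
  intros x Hx. rewrite nodup_In, filter_In in Hx. apply HD, Hx.
Qed.

Fixpoint sublists {T} (l : list T) : list (list T) :=
  match l with [] => [[]] | a :: l' => map (cons a) (sublists l') ++ sublists l' end.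

Lemma filter_in_sublists {T} (f : T -> bool) l : In (filter f l) (sublists l).
Proof.
  induction l; simpl; auto.
  destruct (f a); apply in_or_app; [left; apply in_map|right]; auto.
Qed.

Lemma sublists_incl {T} (l G : list T) : In G (sublists l) -> incl G l.
Proof.
  revert G; induction l as [|a l IH]; simpl; intros G H x Hx.
  - destruct H as [<-|[]]; destruct Hx.
  - apply in_app_or in H as [H|H].
    + apply in_map_iff in H as [G' [<- HG']].
      destruct Hx as [<-|Hx]; [now left|right; exact (IH G' HG' x Hx)].
    + right; exact (IH G H x Hx).
Qed.

Fixpoint lists_upto {T} (n : nat) (X : list T) : list (list T) :=
  match n with
  | 0 => [[]]
  | S n' => [] :: flat_map (fun a => map (cons a) (lists_upto n' X)) X
  end.

Lemma lists_upto_complete {T} n (X : list T) l :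
  length l <= n -> incl l X -> In l (lists_upto n X).
Proof.
  induction n as [|n IH] in l |- *; intros Hl HX; simpl.
  - destruct l; simpl in *; [auto|lia].
  - destruct l as [|a l]; [now left|right]. apply in_flat_map. exists a.
    split; [apply HX; now left|]. apply in_map, IH; simpl in *; [lia|].
    intros x Hx; apply HX; now right.
Qed.

Lemma finite_sig {T : Type} (P : T -> Prop) (l : list T) :
  (forall x, P x -> In x l) -> finite_type {x | P x}.
Proof.
  intros H.
  exists (flat_map (fun t => match excluded_middle_informative (P t) with
                             | left Ht => [exist P t Ht] | right _ => [] end) l).
  intros [x Hx]. apply in_flat_map. exists x. split; [auto|].
  destruct (excluded_middle_informative (P x)) as [H'|H']; [|contradiction].
  left. f_equal. apply proof_irrelevance.
Qed.

Definition node : Type := list form * option form.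

Definition tip (p : list node) : list form := match p with (D, _) :: _ => D | [] => [] end.

Definition extends (p q : list node) : Prop := exists e, e <> [] /\ q = e ++ p.

Lemma extends_length p q : extends p q -> length p < length q.
Proof. intros [e [He ->]]. rewrite length_app. destruct e; [congruence|simpl; lia]. Qed.

Lemma extends_trans p q r : extends p q -> extends q r -> extends p r.
Proof.
  intros [e1 [He1 ->]] [e2 [He2 ->]]. exists (e2 ++ e1).
  split; [destruct e2; simpl; congruence|apply app_assoc].
Qed.

Section Completeness.
Variables (j1 j5 : bool) (A0 : form).
Notation pv := (prov j1 j5).

(** * The finite closure set *)

Definition rhds : list (form * form) := rhd_pairs (sub A0).
Definition antecedents : list form := map fst rhds.

Definition critical_formula (B C : form) (l : list form) : form :=
  And B (And (Neg (disj_list l))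
    (And (if j1 then Neg C else Top) (if j5 then Box (Neg C) else Top))).

(* Box ~(critical_formula B C l) makes B imply a member of l, or C (under J1),
   or Dia C (under J5); each of these interprets C. *)
Lemma rhd_of_box_neg_critical_formula H B C l :
  (forall B', In B' l -> exists Y,
     pv (Imp H (Rhd B' Y)) /\ pv (Imp H (Box (Neg (And Y (Neg C)))))) ->
  pv (Imp H (Box (Neg (critical_formula B C l)))) -> pv (Imp H (Rhd B C)).
Proof.
  intros Hl hcrit.
  set (e1 := if j1 then C else Bot). set (e5 := if j5 then Dia C else Bot).
  set (T := Or (disj_list l) (Or e1 e5)).
  assert (hbox : pv (Imp (Box (Neg (critical_formula B C l))) (Box (Imp B T)))).
  { apply box_mono, ax_taut. unfold critical_formula. destruct j1, j5; truth_table. }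
  assert (hl : pv (Imp H (Rhd (disj_list l) C))).
  { apply imp_rhd_disj_list. intros B' HB'. destruct (Hl B' HB') as [Y [hY hYC]].
    assert (h : pv (Imp (Box (Neg (And Y (Neg C)))) (Box (Imp Y C))))
      by (apply box_mono, ax_taut; truth_table).
    pose proof (ax_J4p j1 j5 Y C B') as hJ4.
    from_premises hY hYC h hJ4. }
  pose proof (rhd_J1_disjunct j1 j5 C) as h1. pose proof (rhd_J5_disjunct j1 j5 C) as h5.
  pose proof (ax_J3 j1 j5 e1 e5 C) as hJ3.
  pose proof (ax_J3 j1 j5 (disj_list l) (Or e1 e5) C) as hJ3'.
  pose proof (rhd_box_antitone j1 j5 B T C) as hanti.
  fold e1 e5 in h1, h5. fold T in hJ3'.
  from_premises hcrit hbox hl h1 h5 hJ3 hJ3' hanti.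
Qed.

(* Besides the subformulas of A0, Phi contains, for every B |> C in A0, the
   boxed negations that decide which successors exist. *)
Definition closure_extras (B C : form) : list form :=
  Box (Neg B) :: Box (Neg C) ::
  map (fun q => Box (Neg (And (snd q) (Neg C)))) rhds ++
  map (fun l => Box (Neg (critical_formula B C l))) (sublists antecedents).

Definition Phi : list form :=
  flat_map sub (A0 :: flat_map (fun q => closure_extras (fst q) (snd q)) rhds).

Lemma Phi_sub p q : In p Phi -> In q (sub p) -> In q Phi.
Proof.
  unfold Phi; rewrite !in_flat_map. intros [r [Hr Hp]] Hq.
  exists r; split; [auto|eapply sub_trans; eauto].
Qed.

Lemma Phi_A0_sub p : In p (sub A0) -> In p Phi.
Proof. intros H. unfold Phi. apply in_flat_map. exists A0. simpl; auto. Qed.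

Lemma Phi_closure_extras B C p : In (B, C) rhds -> In p (closure_extras B C) -> In p Phi.
Proof.
  intros HBC Hp. unfold Phi. apply in_flat_map. exists p. split; [|apply sub_refl].
  right. apply in_flat_map. exists (B, C). auto.
Qed.

Lemma Phi_box_neg_ant B C : In (B, C) rhds -> In (Box (Neg B)) Phi.
Proof. intros H. apply (Phi_closure_extras B C); simpl; auto. Qed.

Lemma Phi_box_neg_cons B C : In (B, C) rhds -> In (Box (Neg C)) Phi.
Proof. intros H. apply (Phi_closure_extras B C); simpl; auto. Qed.

Lemma Phi_box_criterion B C B' C' : In (B, C) rhds -> In (B', C') rhds ->
  In (Box (Neg (And C' (Neg C)))) Phi.
Proof.
  intros H H'. apply (Phi_closure_extras B C); [auto|]. do 2 right. apply in_or_app; left.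
  apply (in_map (fun q => Box (Neg (And (snd q) (Neg C)))) _ (B', C')), H'.
Qed.

Lemma Phi_box_critical_formula B C l : In (B, C) rhds -> In l (sublists antecedents) ->
  In (Box (Neg (critical_formula B C l))) Phi.
Proof.
  intros H Hl. apply (Phi_closure_extras B C); [auto|]. do 2 right. apply in_or_app; right.
  apply (in_map (fun l => Box (Neg (critical_formula B C l)))), Hl.
Qed.

Lemma rhds_sub B C : In (B, C) rhds -> In B (sub A0) /\ In C (sub A0).
Proof.
  unfold rhds; rewrite in_rhd_pairs. intros H.
  split; eapply sub_trans; eauto; simpl; right; apply in_or_app; [left|right]; apply sub_refl.
Qed.

Definition rhd_closed (p : form) : Prop := forall B C, In (Rhd B C) (sub p) -> In (B, C) rhds.

Lemma rhd_closed_A0 p : In p (sub A0) -> rhd_closed p.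
Proof. intros H B C HBC. apply in_rhd_pairs. eapply sub_trans; eauto. Qed.

Lemma rhd_closed_Top : rhd_closed Top.
Proof. intros B C [E|[]]; discriminate. Qed.

Lemma rhd_closed_Bot : rhd_closed Bot.
Proof. intros B C [E|[]]; discriminate. Qed.

Lemma rhd_closed_Box p : rhd_closed p -> rhd_closed (Box p).
Proof. intros Hp B C [E|H]; [discriminate|auto]. Qed.

Lemma rhd_closed_Imp p q : rhd_closed p -> rhd_closed q -> rhd_closed (Imp p q).
Proof. intros Hp Hq B C [E|H]; [discriminate|apply in_app_or in H as [H|H]; auto]. Qed.

Lemma rhd_closed_And p q : rhd_closed p -> rhd_closed q -> rhd_closed (And p q).
Proof. intros Hp Hq B C [E|H]; [discriminate|apply in_app_or in H as [H|H]; auto]. Qed.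

Lemma rhd_closed_Or p q : rhd_closed p -> rhd_closed q -> rhd_closed (Or p q).
Proof. intros Hp Hq B C [E|H]; [discriminate|apply in_app_or in H as [H|H]; auto]. Qed.

Lemma rhd_closed_Neg p : rhd_closed p -> rhd_closed (Neg p).
Proof. intros Hp. apply rhd_closed_Imp; [auto|apply rhd_closed_Bot]. Qed.

Lemma rhd_closed_disj_list l : (forall p, In p l -> rhd_closed p) -> rhd_closed (disj_list l).
Proof.
  induction l as [|a l IH]; intros Hl; simpl; [apply rhd_closed_Bot|].
  apply rhd_closed_Or; [apply Hl; now left|apply IH; intros p Hp; apply Hl; now right].
Qed.

Local Hint Resolve rhd_closed_A0 rhd_closed_Top rhd_closed_Box rhd_closed_Imp rhd_closed_And
  rhd_closed_Neg rhd_closed_disj_list : core.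

Lemma rhd_closed_closure_extras B C p :
  In (B, C) rhds -> In p (closure_extras B C) -> rhd_closed p.
Proof.
  intros HBC Hp. destruct (rhds_sub B C HBC) as [HB HC].
  destruct Hp as [<-|[<-|Hp]]; auto. apply in_app_or in Hp as [Hp|Hp]; apply in_map_iff in Hp.
  - destruct Hp as [[B' C'] [<- Hq]]. destruct (rhds_sub B' C' Hq); simpl; auto 8.
  - destruct Hp as [l [<- Hl]]. unfold critical_formula.
    assert (Hant : forall p, In p l -> rhd_closed p).
    { intros p Hp. apply sublists_incl in Hl. apply Hl, in_map_iff in Hp as [[B' C'] [<- Hq]].
      apply rhd_closed_A0, (rhds_sub B' C' Hq). }
    destruct j1, j5; auto 12.
Qed.

Lemma Phi_Rhd B C : In (Rhd B C) Phi -> In (B, C) rhds.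
Proof.
  unfold Phi; rewrite in_flat_map. intros [r [Hr H]]. revert B C H. fold (rhd_closed r).
  destruct Hr as [<-|Hr]; [apply rhd_closed_A0, sub_refl|].
  apply in_flat_map in Hr as [[B C] [HBC Hr]]. eapply rhd_closed_closure_extras; eauto.
Qed.

Lemma Phi_Imp p q : In (Imp p q) Phi -> In p Phi /\ In q Phi.
Proof.
  intros H; split; eapply Phi_sub; eauto; simpl; right; apply in_app_iff; auto using sub_refl.
Qed.

Lemma Phi_And p q : In (And p q) Phi -> In p Phi /\ In q Phi.
Proof.
  intros H; split; eapply Phi_sub; eauto; simpl; right; apply in_app_iff; auto using sub_refl.
Qed.

Lemma Phi_Or p q : In (Or p q) Phi -> In p Phi /\ In q Phi.
Proof.
  intros H; split; eapply Phi_sub; eauto; simpl; right; apply in_app_iff; auto using sub_refl.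
Qed.

Lemma Phi_Rhd_args p q : In (Rhd p q) Phi -> In p Phi /\ In q Phi.
Proof.
  intros H; split; eapply Phi_sub; eauto; simpl; right; apply in_app_iff; auto using sub_refl.
Qed.

Lemma Phi_Box p : In (Box p) Phi -> In p Phi.
Proof. intros H; eapply Phi_sub; eauto; simpl; right; apply sub_refl. Qed.

Lemma Phi_Neg p : In (Neg p) Phi -> In p Phi.
Proof. intros H. apply (Phi_Imp p Bot H). Qed.

(** * Maximal consistent subsets of Phi *)

Definition consistent (p : form) : Prop := ~ pv (Neg p).

Lemma consistent_sat p : consistent p -> exists v, peval v p = true.
Proof.
  intros Hp. apply NNPP; intros Hn. apply Hp, ax_taut. intros v; simpl.
  destruct (peval v p) eqn:E; [exfalso; eauto|reflexivity].
Qed.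

Lemma consistent_weaken p q :
  (forall v, peval v q = true -> peval v p = true) -> consistent q -> consistent p.
Proof.
  intros Hqp Hq Hp. apply Hq. revert Hp. apply prov_taut_mp. intros v; simpl.
  specialize (Hqp v). destruct (peval v q), (peval v p); simpl; auto.
Qed.

Lemma lindenbaum_literals L p : consistent p -> exists f, consistent (And p (literals f L)).
Proof.
  induction L as [|q L IH] in p |- *; intros Hp.
  - exists (fun _ => true). revert Hp; apply consistent_weaken. simpl. intros v ->; auto.
  - assert (Hb : exists b : bool, consistent (And p (if b then q else Neg q))).
    { destruct (classic (consistent (And p q))) as [H|H]; [exists true; auto|].
      destruct (classic (consistent (And p (Neg q)))) as [H'|H']; [exists false; auto|].
      exfalso. unfold consistent in *. apply NNPP in H, H'. apply Hp. from_premises H H'. }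
    destruct Hb as [b Hb]. destruct (IH _ Hb) as [f Hf].
    exists (fun x => if form_eq_dec x q then b else f x).
    revert Hf; apply consistent_weaken. intros v Hv. simpl in Hv.
    rewrite !Bool.andb_true_iff, peval_literals in Hv. destruct Hv as [[Hvp Hvq] HvL].
    assert (Hq : peval v q = b) by (destruct b; simpl in Hvq; [auto|destruct (peval v q); auto]).
    cbn [peval]. rewrite Hvp. apply peval_literals. intros x Hx.
    destruct (form_eq_dec x q) as [->|Hne]; [auto|].
    destruct Hx as [<-|Hx]; [congruence|auto].
Qed.

Definition char_form (D : list form) : form := literals (fun q => inb q D) Phi.

Definition maxcons (D : list form) : Prop :=
  (exists f, D = filter f Phi) /\ consistent (char_form D).

Definition agrees (v : form -> bool) (D : list form) : Prop :=
  forall q, In q Phi -> (In q D <-> peval v q = true).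

Lemma maxcons_incl D : maxcons D -> incl D Phi.
Proof. intros [[f ->] _] p Hp. apply filter_In in Hp; tauto. Qed.

Lemma agrees_char_form v D : peval v (char_form D) = true -> agrees v D.
Proof.
  unfold char_form; rewrite peval_literals. intros H q Hq. rewrite (H q Hq), inb_iff. tauto.
Qed.

Lemma maxcons_agrees D : maxcons D -> exists v, agrees v D.
Proof.
  intros [_ HD]. destruct (consistent_sat _ HD) as [v Hv]. exists v. apply agrees_char_form, Hv.
Qed.

Lemma lindenbaum p : consistent p -> exists D v, maxcons D /\ agrees v D /\ peval v p = true.
Proof.
  intros Hp. destruct (lindenbaum_literals Phi p Hp) as [f Hf].
  assert (Hchar : char_form (filter f Phi) = literals f Phi).
  { unfold char_form, literals. f_equal. apply map_ext_in. intros x Hx.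
    replace (inb x (filter f Phi)) with (f x); [reflexivity|].
    destruct (f x) eqn:Ef.
    - symmetry. apply inb_iff, filter_In. auto.
    - destruct (inb x (filter f Phi)) eqn:Ei; [|reflexivity].
      apply inb_iff, filter_In in Ei as [_ Ei]. congruence. }
  destruct (consistent_sat _ Hf) as [v Hv].
  simpl in Hv. apply Bool.andb_true_iff in Hv as [Hvp Hvf].
  exists (filter f Phi), v. split; [split|split].
  - eauto.
  - rewrite Hchar. revert Hf; apply consistent_weaken.
    intros w Hw. simpl in Hw. now apply Bool.andb_true_iff in Hw.
  - apply agrees_char_form. now rewrite Hchar.
  - exact Hvp.
Qed.

Lemma char_form_mem D q : In q D -> In q Phi -> pv (Imp (char_form D) q).
Proof.
  intros H Hq. apply ax_taut; intros v; simpl.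
  destruct (peval v (char_form D)) eqn:E; [|reflexivity].
  now apply (agrees_char_form v D E q Hq) in H as ->.
Qed.

Lemma mem_of_prov D q : maxcons D -> In q Phi -> pv (Imp (char_form D) q) -> In q D.
Proof.
  intros [_ HD] Hq H. apply NNPP; intros Hn. apply HD. revert H; apply prov_taut_mp.
  intros v; simpl. destruct (peval v (char_form D)) eqn:E; [|reflexivity].
  destruct (peval v q) eqn:Eq; [|reflexivity].
  exfalso. apply Hn, (agrees_char_form v D E q Hq), Eq.
Qed.

Lemma maxcons_Bot D : maxcons D -> ~ In Bot D.
Proof.
  intros HD H. destruct (maxcons_agrees D HD) as [v Hv].
  apply Hv in H; [discriminate|]. apply (maxcons_incl D HD), H.
Qed.

Lemma maxcons_Top D : maxcons D -> In Top Phi -> In Top D.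
Proof. intros HD H. destruct (maxcons_agrees D HD) as [v Hv]. now apply Hv. Qed.

Lemma maxcons_Imp D p q : maxcons D -> In (Imp p q) Phi ->
  (In (Imp p q) D <-> (In p D -> In q D)).
Proof.
  intros HD H. destruct (Phi_Imp _ _ H). destruct (maxcons_agrees D HD) as [v Hv]; red in Hv.
  rewrite !Hv by auto. simpl. destruct (peval v p), (peval v q); simpl; intuition congruence.
Qed.

Lemma maxcons_And D p q : maxcons D -> In (And p q) Phi ->
  (In (And p q) D <-> In p D /\ In q D).
Proof.
  intros HD H. destruct (Phi_And _ _ H). destruct (maxcons_agrees D HD) as [v Hv]; red in Hv.
  rewrite !Hv by auto. simpl. destruct (peval v p), (peval v q); simpl; intuition congruence.
Qed.

Lemma maxcons_Or D p q : maxcons D -> In (Or p q) Phi ->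
  (In (Or p q) D <-> In p D \/ In q D).
Proof.
  intros HD H. destruct (Phi_Or _ _ H). destruct (maxcons_agrees D HD) as [v Hv]; red in Hv.
  rewrite !Hv by auto. simpl. destruct (peval v p), (peval v q); simpl; intuition congruence.
Qed.

Lemma maxcons_Neg D p : maxcons D -> In (Neg p) Phi -> (In (Neg p) D <-> ~ In p D).
Proof.
  intros HD H. unfold Neg. rewrite maxcons_Imp by auto. pose proof (maxcons_Bot D HD). tauto.
Qed.

Lemma maxcons_disj_list D l p : maxcons D -> In (disj_list l) Phi ->
  In p l -> In p D -> In (disj_list l) D.
Proof.
  intros HD. induction l as [|a l IH]; simpl; intros Hl Hp HpD; [contradiction|].
  destruct (Phi_Or _ _ Hl). apply (maxcons_Or D _ _ HD Hl).
  destruct Hp as [<-|Hp]; auto.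
Qed.

Lemma maxcons_critical_formula D B C l : maxcons D -> In (critical_formula B C l) D ->
  In B D /\ (forall B', In B' l -> ~ In B' D) /\
  (j1 = true -> ~ In C D) /\ (j5 = true -> In (Box (Neg C)) D).
Proof.
  intros HD H. pose proof (maxcons_incl _ HD _ H) as HP. unfold critical_formula in *.
  destruct (Phi_And _ _ HP) as [_ HP1]. destruct (Phi_And _ _ HP1) as [HPd HP2].
  destruct (Phi_And _ _ HP2) as [HP3 _].
  apply (maxcons_And _ _ _ HD HP) in H as [HB H].
  apply (maxcons_And _ _ _ HD HP1) in H as [Hd H].
  apply (maxcons_And _ _ _ HD HP2) in H as [H1 H5].
  apply (maxcons_Neg _ _ HD HPd) in Hd.
  split; [exact HB|split; [|split]].
  - intros B' HB' HB'D. apply Hd, (maxcons_disj_list D l B'); auto. apply Phi_Neg, HPd.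
  - destruct j1; [intros _|discriminate]. exact (proj1 (maxcons_Neg _ _ HD HP3) H1).
  - destruct j5; [intros _|discriminate]. exact H5.
Qed.

(** * Successors *)

Definition boxed_part (G : list form) : form :=
  conj_list (map (fun E => And E (Box E)) (unbox G)).

Lemma peval_boxed_part v G E : peval v (boxed_part G) = true -> In (Box E) G ->
  peval v E = true /\ peval v (Box E) = true.
Proof.
  unfold boxed_part. rewrite peval_conj_list. intros H HE.
  apply Bool.andb_true_iff, (H (And E (Box E))).
  apply (in_map (fun E => And E (Box E))), in_unbox, HE.
Qed.

Lemma char_form_box_boxed_part G : maxcons G -> pv (Imp (char_form G) (Box (boxed_part G))).
Proof.
  intros HG. apply imp_box_conj_list. intros x Hx.
  apply in_map_iff in Hx as [E [<- HE]]. apply in_unbox in HE.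
  pose proof (char_form_mem G _ HE (maxcons_incl _ HG _ HE)) as h1.
  pose proof (box_trans j1 j5 E) as h2. pose proof (box_and j1 j5 E (Box E)) as h3.
  from_premises h1 h2 h3.
Qed.

(* boxed_part G, Box D and ~D are consistent together: otherwise G would prove
   Box (Box D -> D), hence Box D by Löb's axiom. *)
Lemma box_witness G D : maxcons G -> In (Box D) Phi -> ~ In (Box D) G ->
  exists T, maxcons T /\ succ G T /\ ~ In D T.
Proof.
  intros HG HD Hn.
  set (p := And (boxed_part G) (And (Box D) (Neg D))).
  assert (Hp : consistent p).
  { intros H. apply Hn, mem_of_prov; auto.
    assert (h1 : pv (Imp (boxed_part G) (Imp (Box D) D))) by from_premises H.
    apply box_mono in h1.
    pose proof (ax_L j1 j5 D) as h2. pose proof (char_form_box_boxed_part G HG) as h3.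
    from_premises h1 h2 h3. }
  destruct (lindenbaum p Hp) as [T [v [HT [Hv Hvp]]]]. red in Hv.
  unfold p in Hvp. simpl in Hvp. rewrite !Bool.andb_true_iff in Hvp.
  destruct Hvp as [Hvb [HvD HvnD]].
  assert (HDP : In D Phi) by (apply Phi_Box, HD).
  exists T. split; [exact HT|split; [split|]].
  - intros E HE. assert (HEP : In (Box E) Phi) by (apply (maxcons_incl _ HG), HE).
    destruct (peval_boxed_part v G E Hvb HE).
    rewrite !Hv by (auto using Phi_Box). auto.
  - exists D. rewrite Hv by auto. auto.
  - rewrite Hv by auto. destruct (peval v D); simpl in HvnD; congruence.
Qed.

Lemma box_neg_witness G X : maxcons G -> In (Box (Neg X)) Phi -> ~ In (Box (Neg X)) G ->
  exists T, maxcons T /\ succ G T /\ In X T.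
Proof.
  intros HG HX Hn. destruct (box_witness G (Neg X) HG HX Hn) as [T [HT [HGT HnT]]].
  exists T. split; [exact HT|split; [exact HGT|]].
  destruct (in_dec form_eq_dec X T) as [H|H]; [exact H|].
  exfalso. apply HnT, maxcons_Neg; auto. apply Phi_Box, HX.
Qed.

Lemma rhd_witness G D B C : maxcons G -> maxcons D -> succ G D ->
  In (Rhd B C) G -> In B D -> exists T, maxcons T /\ succ G T /\ In C T.
Proof.
  intros HG HD HGD HBC HB.
  assert (HBCP : In (Rhd B C) Phi) by (apply (maxcons_incl _ HG), HBC).
  pose proof (Phi_Rhd _ _ HBCP) as HRh.
  destruct (in_dec form_eq_dec (Box (Neg C)) G) as [H|H].
  - assert (HnB : In (Box (Neg B)) G).
    { apply mem_of_prov; [auto|apply (Phi_box_neg_ant _ C), HRh|].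
      pose proof (char_form_mem G _ H (Phi_box_neg_cons _ _ HRh)) as h1.
      pose proof (char_form_mem G _ HBC HBCP) as h2.
      pose proof (ax_J4p j1 j5 C Bot B) as h3. pose proof (ax_J6 j1 j5 B) as h4.
      from_premises h1 h2 h3 h4. }
    assert (HnBP : In (Neg B) Phi) by (apply Phi_Box, (Phi_box_neg_ant _ C), HRh).
    destruct (proj1 HGD _ HnB) as [HnBD _].
    exfalso. exact (proj1 (maxcons_Neg D B HD HnBP) HnBD HB).
  - apply box_neg_witness; auto. apply (Phi_box_neg_cons B), HRh.
Qed.

Lemma criterion_witness G B C B' C' : maxcons G -> In (B, C) rhds -> In (B', C') rhds ->
  ~ In (Box (Neg (And C' (Neg C)))) G ->
  exists T, maxcons T /\ succ G T /\ In C' T /\ ~ In C T.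
Proof.
  intros HG HBC HBC' Hn.
  pose proof (Phi_box_criterion B C B' C' HBC HBC') as HP.
  destruct (box_neg_witness G _ HG HP Hn) as [T [HT [HGT HX]]].
  assert (HXP : In (And C' (Neg C)) Phi) by (apply Phi_Neg, Phi_Box, HP).
  apply (maxcons_And T _ _ HT HXP) in HX as [HC' HnC].
  apply (maxcons_Neg T _ HT (proj2 (Phi_And _ _ HXP))) in HnC.
  eauto.
Qed.

Definition critical (G D : list form) (C : form) : Prop :=
  (forall B' C', In (Rhd B' C') G -> In B' D ->
     exists T, maxcons T /\ succ G T /\ In C' T /\ ~ In C T) /\
  (j1 = true -> ~ In C D) /\ (j5 = true -> In (Box (Neg C)) D).

Definition blocked (G : list form) (C : form) : list form :=
  filter (fun B' => if excluded_middle_informative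
             (exists Y, In (Rhd B' Y) G /\ In (Box (Neg (And Y (Neg C)))) G)
           then true else false) antecedents.

Lemma in_blocked G C B' : In B' (blocked G C) <->
  In B' antecedents /\ exists Y, In (Rhd B' Y) G /\ In (Box (Neg (And Y (Neg C)))) G.
Proof.
  unfold blocked. rewrite filter_In.
  destruct excluded_middle_informative; intuition discriminate.
Qed.

Lemma critical_witness G B C : maxcons G -> In (B, C) rhds -> ~ In (Rhd B C) G ->
  exists D, maxcons D /\ succ G D /\ In B D /\ critical G D C.
Proof.
  intros HG HBC Hn.
  set (X := critical_formula B C (blocked G C)).
  assert (HX : In (Box (Neg X)) Phi)
    by (apply Phi_box_critical_formula; [exact HBC|apply filter_in_sublists]).
  destruct (in_dec form_eq_dec (Box (Neg X)) G) as [H|H].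
  - exfalso. apply Hn, mem_of_prov; [auto|apply Phi_A0_sub, in_rhd_pairs, HBC|].
    apply (rhd_of_box_neg_critical_formula _ _ _ (blocked G C)); [|apply char_form_mem; auto].
    intros B' HB'. apply in_blocked in HB' as [_ [Y [HY HYC]]].
    exists Y. split; apply char_form_mem; auto; apply (maxcons_incl _ HG); auto.
  - destruct (box_neg_witness G _ HG HX H) as [D [HD [HGD HXD]]].
    destruct (maxcons_critical_formula D B C _ HD HXD) as [HB [Hblocked Hj15]].
    exists D. split; [exact HD|split; [exact HGD|split; [exact HB|split; [|exact Hj15]]]].
    intros B' C' HB'C' HB'.
    pose proof (Phi_Rhd _ _ (maxcons_incl _ HG _ HB'C')) as HRh'.
    apply (criterion_witness G B C B' C' HG HBC HRh').
    intros HC'. apply (Hblocked B'); [|exact HB'].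
    apply in_blocked. split; [apply (in_map fst _ (B', C')), HRh'|eauto].
Qed.

(** * The countermodel *)

(* A chain lists its atoms from the newest back to the root; a node tagged
   [Some C] is a C-critical successor of the node below it. *)
Fixpoint chain (p : list node) : Prop :=
  match p with
  | [] => False
  | (D, t) :: q =>
      maxcons D /\ match t with None => True | Some C => In C Phi end /\
      match q with
      | [] => t = None
      | _ :: _ => chain q /\ succ (tip q) D /\
                  match t with None => True | Some C => critical (tip q) D C end
      end
  end.

Lemma chain_nonempty p : chain p -> p <> [].
Proof. destruct p; simpl; [tauto|discriminate]. Qed.

Lemma chain_maxcons p : chain p -> maxcons (tip p).
Proof. destruct p as [|[D t] q]; simpl; tauto. Qed.

Lemma chain_tail D t q : chain ((D, t) :: q) -> q <> [] -> chain q /\ succ (tip q) D.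
Proof. simpl. destruct q; [congruence|]. tauto. Qed.

Lemma chain_critical D C q : chain ((D, Some C) :: q) -> critical (tip q) D C.
Proof. simpl. destruct q; [intros [_ [_ H]]; discriminate|]. tauto. Qed.

Lemma chain_cons p T : chain p -> maxcons T -> succ (tip p) T -> chain ((T, None) :: p).
Proof. intros Hp HT HR. simpl. destruct p; [contradiction|]. tauto. Qed.

Lemma chain_cons_critical p D C : chain p -> maxcons D -> succ (tip p) D -> In C Phi ->
  critical (tip p) D C -> chain ((D, Some C) :: p).
Proof. intros Hp HD HR HC Hcrit. simpl. destruct p; [contradiction|]. tauto. Qed.

Lemma chain_succ e q : chain (e ++ q) -> e <> [] -> q <> [] -> succ (tip q) (tip (e ++ q)).
Proof.
  induction e as [|[D t] e IH]; intros H He Hq; [congruence|].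
  assert (Hne : e ++ q <> []) by (destruct e; simpl; [auto|discriminate]).
  destruct (chain_tail D t (e ++ q) H Hne) as [Hc HR].
  destruct e as [|a e']; [exact HR|].
  eapply succ_trans; [apply IH; auto; discriminate|exact HR].
Qed.

Lemma chain_length p : chain p -> length p <= S (length Phi).
Proof.
  intros H. pose proof (box_count_le _ _ (maxcons_incl _ (chain_maxcons p H))).
  enough (length p <= S (box_count (tip p))) by lia.
  clear H0. induction p as [|[D t] q IH]; [destruct H|].
  destruct q as [|a q']; [simpl; lia|].
  destruct (chain_tail D t (a :: q') H) as [Hc HR]; [discriminate|].
  pose proof (succ_box_count _ _ HR). specialize (IH Hc). simpl in *. lia.
Qed.

Definition nodes : list node := list_prod (sublists Phi) (None :: map Some Phi).

Lemma chain_enum p : chain p -> In p (lists_upto (S (length Phi)) nodes).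
Proof.
  intros H. apply lists_upto_complete; [apply chain_length, H|].
  induction p as [|[D t] q IH]; [contradiction|]. intros a [<-|Ha].
  - destruct H as [[[f ->] _] [Ht _]]. apply in_prod_iff. split; [apply filter_in_sublists|].
    destruct t; simpl; [right; apply in_map|]; auto.
  - destruct q as [|b q']; [contradiction|].
    apply IH; [apply (chain_tail D t); [auto|discriminate]|auto].
Qed.

Definition World : Type := {p : list node | chain p}.
Definition path (x : World) : list node := proj1_sig x.
Definition Rm (x y : World) : Prop := extends (path x) (path y).

(* S is total except that a node tagged C over p does not see the extensions
   of p that contain C. *)
Definition unblocked (y z : list node) : Prop :=
  match y with
  | (_, Some C) :: p => extends p z -> ~ In C (tip z)
  | _ => True
  end.

Definition Sm (x y : World) : Prop :=
  (j1 = true /\ x = y) \/ (j5 = true /\ Rm x y) \/ unblocked (path x) (path y).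

Definition Vm (n : nat) (x : World) : Prop := In (Var n) (tip (path x)).

Notation forces_m := (forces Rm Sm Vm).

Lemma model_L_frame : inhabited World -> simplified_L_frame j1 j5 World Rm Sm.
Proof.
  intros Hinh. split; [split; [exact Hinh|split]|split].
  - intros x y z. apply extends_trans.
  - apply (well_founded_lt_compat World (fun x => S (length Phi) - length (path x))).
    intros y x Hxy. pose proof (chain_length _ (proj2_sig y)).
    pose proof (extends_length _ _ Hxy). unfold path in *. lia.
  - intros Hj1 x. left; auto.
  - intros Hj5 x y H. right; left; auto.
Qed.

Lemma model_finite : finite_type World.
Proof. apply (finite_sig chain _ chain_enum). Qed.

Lemma Rm_extend (x : World) D t (H : chain ((D, t) :: path x)) : Rm x (exist _ _ H).
Proof. exists [(D, t)]. split; [discriminate|reflexivity]. Qed.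

Lemma truth_Box D :
  (forall x : World, forces_m x D <-> In D (tip (path x))) ->
  In (Box D) Phi -> forall x : World, forces_m x (Box D) <-> In (Box D) (tip (path x)).
Proof.
  intros IH HD x. pose proof (chain_maxcons _ (proj2_sig x)) as Hx. cbn [forces]. split.
  - intros H. destruct (in_dec form_eq_dec (Box D) (tip (path x))) as [Hin|Hn]; [exact Hin|].
    exfalso. destruct (box_witness _ D Hx HD Hn) as [T [HT [HR HnT]]].
    pose proof (chain_cons _ T (proj2_sig x) HT HR) as Hc.
    apply HnT, (IH (exist _ _ Hc)), H, Rm_extend.
  - intros H y [e [He E]]. apply IH.
    pose proof (chain_succ e (path x)) as Hs. rewrite <- E in Hs.
    apply Hs; [apply (proj2_sig y)|exact He|apply chain_nonempty, (proj2_sig x)|exact H].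
Qed.

Lemma critical_node_refutes (x : World) D C (H : chain ((D, Some C) :: path x)) (z : World) :
  Rm x z -> Sm (exist _ _ H) z -> ~ In C (tip (path z)).
Proof.
  intros Hxz HS HCz. destruct (chain_critical _ _ _ H) as [_ [Hj1 Hj5]].
  destruct HS as [[Ej <-]|[[Ej [e [He E]]]|Hu]].
  - exact (Hj1 Ej HCz).
  - assert (HR : succ D (tip (path z))).
    { change (path z = e ++ (D, Some C) :: path x) in E.
      pose proof (chain_succ e ((D, Some C) :: path x)) as Hs. rewrite <- E in Hs.
      apply Hs; [apply (proj2_sig z)|exact He|discriminate]. }
    destruct (proj1 HR _ (Hj5 Ej)) as [HnC _].
    assert (HnCP : In (Neg C) Phi) by (apply Phi_Box, (maxcons_incl _ (proj1 H)), Hj5, Ej).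
    exact (proj1 (maxcons_Neg _ _ (chain_maxcons _ (proj2_sig z)) HnCP) HnC HCz).
  - exact (Hu Hxz HCz).
Qed.

Lemma rhd_interpretation (x y : World) B C :
  In (Rhd B C) (tip (path x)) -> Rm x y -> In B (tip (path y)) ->
  exists T, maxcons T /\ succ (tip (path x)) T /\ In C T /\
            unblocked (path y) ((T, None) :: path x).
Proof.
  destruct x as [p Hp], y as [q Hq]. unfold Rm, path; simpl. intros HBC [e [He ->]] HB.
  destruct e as [|[D t] e']; [congruence|]. simpl in HB.
  pose proof (chain_succ ((D, t) :: e') p Hq He (chain_nonempty p Hp)) as HR.
  destruct (rhd_witness _ _ B C (chain_maxcons p Hp) (chain_maxcons _ Hq) HR HBC HB)
    as [T [HT [HRT HCT]]].
  destruct t as [C0|]; [destruct e' as [|a e'']|].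
  - destruct (chain_critical _ _ _ Hq) as [Hcrit _].
    destruct (Hcrit B C HBC HB) as [T' [HT' [HRT' [HCT' HnC0]]]].
    exists T'. do 3 (split; [assumption|]). simpl. intros _. exact HnC0.
  - exists T. do 3 (split; [assumption|]). simpl. intros Hext. exfalso.
    apply extends_length in Hext. simpl in Hext. rewrite length_app in Hext. lia.
  - exists T. do 3 (split; [assumption|]). exact I.
Qed.

Lemma truth_Rhd B C :
  (forall x : World, forces_m x B <-> In B (tip (path x))) ->
  (forall x : World, forces_m x C <-> In C (tip (path x))) ->
  In (Rhd B C) Phi -> forall x : World, forces_m x (Rhd B C) <-> In (Rhd B C) (tip (path x)).
Proof.
  intros IHB IHC HBC x. pose proof (chain_maxcons _ (proj2_sig x)) as Hx. cbn [forces]. split.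
  - intros H. destruct (in_dec form_eq_dec (Rhd B C) (tip (path x))) as [Hin|Hn]; [exact Hin|].
    exfalso. destruct (Phi_Rhd_args _ _ HBC) as [_ HC].
    destruct (critical_witness _ B C Hx (Phi_Rhd _ _ HBC) Hn) as [D [HD [HR [HBD Hcrit]]]].
    pose proof (chain_cons_critical _ D C (proj2_sig x) HD HR HC Hcrit) as Hy.
    destruct (H (exist _ _ Hy) (Rm_extend x _ _ Hy)) as [z [Hxz [Hyz Hz]]]; [apply IHB, HBD|].
    apply (critical_node_refutes x D C Hy z Hxz Hyz), IHC, Hz.
  - intros Hin y Hxy Hy. apply IHB in Hy.
    destruct (rhd_interpretation x y B C Hin Hxy Hy) as [T [HT [HR [HCT Hu]]]].
    pose proof (chain_cons _ T (proj2_sig x) HT HR) as Hz.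
    exists (exist _ _ Hz). split; [apply Rm_extend|split; [right; right; exact Hu|apply IHC, HCT]].
Qed.

Lemma truth_lemma phi : In phi Phi ->
  forall x : World, forces_m x phi <-> In phi (tip (path x)).
Proof.
  induction phi; intros Hphi x; pose proof (chain_maxcons _ (proj2_sig x)) as Hx.
  - reflexivity.
  - cbn [forces]. split; [intros _; apply maxcons_Top; auto|auto].
  - cbn [forces]. pose proof (maxcons_Bot _ Hx). tauto.
  - destruct (Phi_Imp _ _ Hphi). cbn [forces].
    rewrite maxcons_Imp, IHphi1, IHphi2 by auto. tauto.
  - destruct (Phi_Or _ _ Hphi). cbn [forces].
    rewrite maxcons_Or, IHphi1, IHphi2 by auto. tauto.
  - destruct (Phi_And _ _ Hphi). cbn [forces].
    rewrite maxcons_And, IHphi1, IHphi2 by auto. tauto.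
  - apply truth_Box; auto using Phi_Box.
  - destruct (Phi_Rhd_args _ _ Hphi). apply truth_Rhd; auto.
Qed.

Lemma countermodel : ~ pv A0 ->
  exists (W : Type) (R S : W -> W -> Prop),
    finite_type W /\ simplified_L_frame j1 j5 W R S /\ ~ valid_in R S A0.
Proof.
  intros HA.
  assert (Hc : consistent (Neg A0)) by (intros H; apply HA; from_premises H).
  destruct (lindenbaum _ Hc) as [D [v [HD [Hv HvA]]]].
  assert (Hroot : chain [(D, None)]) by (simpl; auto).
  assert (HAP : In A0 Phi) by (apply Phi_A0_sub, sub_refl).
  exists World, Rm, Sm.
  split; [apply model_finite|split; [apply model_L_frame, inhabits, (exist _ _ Hroot)|]].
  intros Hval. apply (truth_lemma A0 HAP (exist _ _ Hroot)), (Hv A0 HAP) in Hval.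
  simpl in HvA. rewrite Hval in HvA. discriminate.
Qed.

End Completeness.

Lemma finite_completeness j1 j5 A :
  (forall (W : Type) (R S : W -> W -> Prop),
      finite_type W -> simplified_L_frame j1 j5 W R S -> valid_in R S A) -> prov j1 j5 A.
Proof.
  intros H. apply NNPP. intros HA.
  destruct (countermodel j1 j5 A HA) as [W [R [S [Hfin [Hframe Hnval]]]]].
  exact (Hnval (H W R S Hfin Hframe)).
Qed.

Theorem theorem3p1 (j1 j5 : bool) (A : form) :
  (prov j1 j5 A <->
   (forall (W : Type) (R S : W -> W -> Prop),
      simplified_L_frame j1 j5 W R S -> valid_in R S A)) /\
  ((forall (W : Type) (R S : W -> W -> Prop),
      simplified_L_frame j1 j5 W R S -> valid_in R S A) <->
   (forall (W : Type) (R S : W -> W -> Prop),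
      finite_type W -> simplified_L_frame j1 j5 W R S -> valid_in R S A)).
Proof.
  split; split.
  - apply soundness.
  - intros H. apply finite_completeness. intros W R S _. apply H.
  - intros H W R S _. apply H.
  - intros H. apply soundness, finite_completeness, H.
Qed.
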